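(* Let $G=(V,E)$ be a $d$-regular graph on $n$ vertices whose conductance $\phi^G(V)$ is at least $\varphi$. Let each edge $e\in E$ independently receive a uniformly random label $Y(e)\in\{0,1\}$, and let $G'=(V\times\{0,1\},E')$ be the graph where, for each $e=(u,v)\in E$, $E'$ contains the two edges $(u^0,v^0),(u^1,v^1)$ if $Y(e)=0$ and the two edges $(u^0,v^1),(u^1,v^0)$ if $Y(e)=1$ (writing $v^b$ for $(v,b)$). Then with probability at least $1-2^{2n}e^{-dn/256}$, $G'$ has conductance $\phi^{G'}(V\times\{0,1\})\ge\min(\varphi/4,1/32)$.
   Context: $\mathrm{vol}(S)=\sum_{v\in S}\deg(v)$; $\phi^G_C(S)=|E(S,C\setminus S)|/\mathrm{vol}(S)$; the conductance of $G$ is $\phi^G(V)=\min\{\phi^G_V(S):0<\mathrm{vol}(S)\le\mathrm{vol}(V)/2\}$. *)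

From Stdlib Require Import Reals.
From mathcomp Require Import all_boot.

Set Implicit Arguments.
Unset Strict Implicit.
Unset Printing Implicit Defensive.

Section Graphs.
Variable T : finType.

Definition simple_graph (r : rel T) : Prop :=
  symmetric r /\ irreflexive r.

Definition deg (r : rel T) (x : T) : nat := #|[set y | r x y]|.

Definition regular (r : rel T) (d : nat) : Prop := forall x, deg r x = d.

Definition vol (r : rel T) (S : {set T}) : nat := \sum_(x in S) deg r x.

(* |E(S, V \ S)| : edges with one endpoint in S and the other outside S;
   each such edge corresponds to exactly one ordered pair (x in S, y notin S). *)
Definition cut (r : rel T) (S : {set T}) : nat :=
  #|[set p : T * T | [&& p.1 \in S, p.2 \notin S & r p.1 p.2]]|.

(* phi^G(V) >= c, written out from the definition of phi^G(V) as a minimum of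
   phi_V(S) = |E(S,V\S)|/vol(S) over all S with 0 < vol(S) <= vol(V)/2. *)
Definition conductance_ge (r : rel T) (c : R) : Prop :=
  forall S : {set T}, (0 < vol r S)%N -> (2 * vol r S <= vol r setT)%N ->
    Rle c (Rdiv (INR (cut r S)) (INR (vol r S))).
End Graphs.

Section Lift.
Variable V : finType.
Variable e : rel V.

Definition is_edge (S : {set V}) : bool :=
  [exists u, exists v, [&& u != v, e u v & S == [set u; v]]].

Definition edgeT : finType := {S : {set V} | is_edge S}.

Definition lab (Y : {ffun edgeT -> bool}) (S : {set V}) : bool :=
  match @insub _ is_edge edgeT S with Some s => Y s | None => false end.

(* G' on V x {0,1}: (u,a) ~ (v,b) iff uv is an edge of G and
   Y(uv) = 0 when a = b, Y(uv) = 1 when a <> b. *)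
Definition dcover (Y : {ffun edgeT -> bool}) : rel (V * bool) :=
  fun x y => e x.1 y.1 && (lab Y [set x.1; y.1] == (x.2 != y.2)).
End Lift.

From Stdlib Require Import Reals Lra.
From mathcomp Require Import all_boot zify.

Set Implicit Arguments.
Unset Strict Implicit.
Unset Printing Implicit Defensive.

(* [%R] is taken by MathComp's ring_scope. *)
Delimit Scope R_scope with Re.

(* Fix S in V x {0,1} with |S| <= n, let its shadow T be the set of vertices with
   a copy in S, T2 those with both copies in S and T1 = T \ T2.  Whatever the
   labels, every edge of G leaving T or leaving T2 lifts to an edge of G' leaving S.
   If |T1| <= n/2, then T or V \ T is a set of at most n/2 vertices and at least
   |S|/4 vertices, so the conductance of G alone gives cut(S) >= phi d|S|/4.
   Otherwise, if cut(S) < d|S|/32, regularity forces m > 7dn/32 edges of G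
   inside T1; such an edge lifts to two edges leaving S unless its label is the
   parity of the copies of its endpoints in S, so fewer than dn/32 of these
   labels may be wrong.  A weighted count bounds the number of such labellings by
   2^|E| (3/4)^m 2^(dn/32) <= 2^|E| exp(-dn/256), and a union bound over the
   2^(2n) sets S concludes. *)

Lemma card_sum (T : finType) (A : {pred T}) : #|A| = \sum_x (x \in A).
Proof. by rewrite -sum1_card big_mkcond. Qed.

Lemma card_set_sum (T : finType) (P : pred T) : #|[set x | P x]| = \sum_x P x.
Proof. by rewrite -sum1dep_card big_mkcond. Qed.

Lemma leq_card_inj (T T' : finType) (f : T -> T') (A : {set T}) (B : {set T'}) :
  injective f -> {in A, forall x, f x \in B} -> #|A| <= #|B|.
Proof.
move=> f_inj fAB; rewrite -(card_imset A f_inj); apply: subset_leq_card.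
by apply/subsetP => _ /imsetP [x Ax ->]; apply: fAB.
Qed.

Lemma leq_card_exists (I T : finType) (P : I -> pred T) :
  #|[set x | [exists i, P i x]]| <= \sum_i #|[set x | P i x]|.
Proof.
rewrite card_set_sum (eq_bigr _ (fun i _ => card_set_sum (P i))) exchange_big.
apply: leq_sum => x _; case: existsP => [[i Pix] | _] //=.
by rewrite (bigD1 i) //= Pix.
Qed.

Lemma odd_card_pairI (T : finType) (A : {set T}) (u v : T) :
  u != v -> odd #|[set u; v] :&: A| = (u \in A) (+) (v \in A).
Proof.
move=> neq_uv; rewrite setIUl cardsU.
have -> : [set u] :&: A :&: ([set v] :&: A) = set0.
  by apply/setP => x; rewrite !inE; case: (x =P u) => // ->; rewrite (negbTE neq_uv) andbF.
have card1I w : #|[set w] :&: A| = (w \in A).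
  case: (boolP (w \in A)) => [wA | /negbTE wNA]; first by rewrite (setIidPl _) ?cards1 ?sub1set.
  rewrite (_ : _ :&: _ = set0) ?cards0 //.
  by apply/setP => x; rewrite !inE; case: eqP => // ->.
by rewrite cards0 subn0 !card1I oddD !oddb.
Qed.

Section Mismatches.
Variables (E : finType) (F : {set E}) (t : E -> bool).

Lemma sum_exp_matches :
  \sum_(Y : {ffun E -> bool}) 2 ^ #|[set f in F | Y f == t f]| = 3 ^ #|F| * 2 ^ #|~: F|.
Proof.
pose w f b := if (f \in F) && (b == t f) then 2 else 1.
rewrite (eq_bigr (fun Y : {ffun E -> bool} => \prod_f w f (Y f))) => [|Y _]; last first.
  by rewrite -prod_nat_const big_mkcond; apply: eq_bigr => f _; rewrite /w inE.
rewrite -bigA_distr_bigA /= (bigID (mem F)) /=.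
rewrite (eq_bigr (fun=> 3)) => [|f Ff]; last by rewrite big_bool /w Ff; case: (t f).
rewrite [X in _ * X](eq_bigr (fun=> 2)) => [|f /negbTE Ff]; last by rewrite big_bool /w Ff.
rewrite !prod_nat_const; congr (_ * 2 ^ _); by apply: eq_card => f; rewrite !inE.
Qed.

Lemma card_few_mismatches (k : nat) :
  #|[set Y : {ffun E -> bool} | #|[set f in F | Y f != t f]| <= k]| * 4 ^ #|F|
  <= 3 ^ #|F| * 2 ^ #|E| * 2 ^ k.
Proof.
set B := [set Y | _].
have split_F (Y : {ffun E -> bool}) :
    #|[set f in F | Y f == t f]| + #|[set f in F | Y f != t f]| = #|F|.
  rewrite -(cardsID [set f | Y f == t f] F); congr (_ + _); apply: eq_card => f;
    by rewrite !inE andbC.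
have weighted : #|B| * 2 ^ #|F| <= 2 ^ k * (3 ^ #|F| * 2 ^ #|~: F|).
  rewrite -sum_exp_matches -sum1_card big_distrl big_distrr /=.
  rewrite [X in _ <= X](bigID (mem B)) /=; apply: leq_trans (leq_addr _ _).
  apply: leq_sum => Y; rewrite inE mul1n => few.
  by rewrite -(split_F Y) expnD mulnC leq_mul2r leq_pexp2l ?orbT.
have -> : 2 ^ #|E| = 2 ^ #|F| * 2 ^ #|~: F| by rewrite -expnD cardsC.
have -> : 4 ^ #|F| = 2 ^ #|F| * 2 ^ #|F| by rewrite -expnMn.
move: weighted; set a := 2 ^ #|F|; set b := 2 ^ #|~: F|; nia.
Qed.

End Mismatches.

Lemma INR_muln (m n : nat) : INR (m * n) = (INR m * INR n)%Re.
Proof. by rewrite -multE mult_INR. Qed.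

Lemma INR_expn (m n : nat) : INR (m ^ n) = (INR m ^ n)%Re.
Proof. by elim: n => [|n IHn]; rewrite ?expnS ?INR_muln ?IHn. Qed.

Lemma exp_pow (x : R) (n : nat) : (exp x ^ n)%Re = exp (INR n * x).
Proof.
elim: n => [|n IHn] /=; first by rewrite Rmult_0_l exp_0.
rewrite IHn -exp_plus; congr exp.
by case: n {IHn} => [|n]; rewrite ?S_INR /=; lra.
Qed.

Lemma exp_le_expn3 (n : nat) : (exp (INR n) <= INR (3 ^ n))%Re.
Proof.
rewrite INR_expn -[INR n]Rmult_1_r -exp_pow; apply: pow_incr.
by split; [apply: Rlt_le; apply: exp_pos | have := exp_le_3; simpl; lra].
Qed.

Lemma pow_le_reg (x y : R) (n : nat) :
  (0 < y)%Re -> (x ^ n.+1 <= y ^ n.+1)%Re -> (x <= y)%Re.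
Proof.
move=> y_gt0 le_pow; apply: Rnot_lt_le => lt_yx.
have lt_pow := Rlt_Rpower_l y x (INR n.+1) (lt_0_INR _ (Nat.lt_0_succ n)) (conj y_gt0 lt_yx).
by rewrite !Rpower_pow in lt_pow; lra.
Qed.

(* After raising to the 7th power, everything reduces to 3 ^ 3 <= 2 ^ 5. *)
Lemma expn_tail_bound (m k q : nat) : 32 * k <= q -> 7 * q < 32 * m ->
  (3 ^ m * 2 ^ k) ^ 256 * 3 ^ q <= (4 ^ m) ^ 256.
Proof.
move=> kq qm.
have -> : (4 ^ m) ^ 256 = 2 ^ (512 * m)
  by rewrite -expnM (_ : 512 * m = 2 * (m * 256)) ?expnM //; lia.
rewrite expnMn -!expnM -mulnA [2 ^ _ * _]mulnC mulnA -expnD.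
rewrite -(@leq_exp2r _ _ 7) // expnMn -!expnM.
have pow3 : 3 ^ ((m * 256 + q) * 7) <= 2 ^ (3040 * m).
  apply: leq_trans (_ : 3 ^ (3 * (608 * m)) <= _); first by apply: leq_pexp2l => //; lia.
  by rewrite (expnM 3 3) (_ : 3040 * m = 5 * (608 * m)) 1?(expnM 2 5) ?leq_exp2r //; lia.
apply: leq_trans (leq_mul pow3 (leqnn _)) _.
by rewrite -expnD leq_pexp2l //; lia.
Qed.

Lemma tail_bound (m k q : nat) : 32 * k <= q -> 7 * q < 32 * m ->
  (INR (3 ^ m * 2 ^ k) <= INR (4 ^ m) * exp (- (INR q / 256)))%Re.
Proof.
move=> kq qm.
have Q_gt0 : (0 < INR (4 ^ m))%Re by apply: lt_0_INR; apply/ltP; rewrite expn_gt0.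
suff tail : (INR (3 ^ m * 2 ^ k) * exp (INR q / 256) <= INR (4 ^ m))%Re.
  rewrite exp_Ropp; apply: (Rmult_le_reg_r (exp (INR q / 256))); first exact: exp_pos.
  by rewrite Rmult_assoc Rinv_l ?Rmult_1_r //; apply: Rgt_not_eq; apply: exp_pos.
apply: (@pow_le_reg _ _ 255) => //.
rewrite Rpow_mult_distr exp_pow.
have -> : (INR 256 * (INR q / 256) = INR q)%Re by rewrite (INR_IZR_INZ 256) /=; field.
apply: Rle_trans (_ : INR ((3 ^ m * 2 ^ k) ^ 256 * 3 ^ q) <= _)%Re.
  rewrite [INR (_ * 3 ^ q)]INR_muln [INR (_ ^ 256)]INR_expn.
  apply: Rmult_le_compat_l; last exact: exp_le_expn3.
  by apply: pow_le; apply: pos_INR.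
by rewrite -INR_expn; apply: le_INR; apply/leP; apply: expn_tail_bound.
Qed.

Lemma Rle_div_INR (c : R) (a b : nat) :
  0 < b -> (c <= INR a / INR b)%Re <-> (c * INR b <= INR a)%Re.
Proof.
move=> b_pos; have b_gt0 : (0 < INR b)%Re by apply: lt_0_INR; apply/ltP.
have cancel_b : (INR a / INR b * INR b = INR a)%Re by field; apply: Rgt_not_eq.
split => [le_c | le_cb]; last by apply: (Rmult_le_reg_r (INR b)); rewrite ?cancel_b.
by rewrite -cancel_b; apply: Rmult_le_compat_r => //; apply: Rlt_le.
Qed.

Lemma INR_sum_le (I : finType) (F : I -> nat) (c : R) :
  (forall i, INR (F i) <= c)%Re -> (INR (\sum_i F i) <= INR #|I| * c)%Re.
Proof.
move=> F_le; rewrite -sum1_card.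
apply: (big_rec2 (fun x y => INR x <= INR y * c)%Re) => [|i x y _ IH].
  by rewrite Rmult_0_l; apply: Rle_refl.
by rewrite -!plusE !plus_INR Rmult_plus_distr_r /= Rmult_1_l; have := F_le i; lra.
Qed.

Lemma card_forall_ratio (I T : finType) (P : I -> pred T) (w : R) :
  0 < #|T| -> (forall i, INR #|[set x | P i x]| <= INR #|T| * w)%Re ->
  (1 - INR #|I| * w <= INR #|[set x | [forall i, ~~ P i x]]| / INR #|T|)%Re.
Proof.
move=> T_pos P_le.
have compl : #|[set x | [forall i, ~~ P i x]]| + #|[set x | [exists i, P i x]]| = #|T|.
  rewrite -(cardsC [set x | [forall i, ~~ P i x]]); congr (_ + _).
  by apply: eq_card => x; rewrite !inE negb_forall; apply: eq_existsb => i; rewrite negbK.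
have union := le_INR _ _ (elimT leP (leq_card_exists P)).
have sum_le := INR_sum_le P_le.
rewrite Rle_div_INR //.
have : INR #|T| = (INR #|[set x | [forall i, ~~ P i x]]| + INR #|[set x | [exists i, P i x]]|)%Re.
  by rewrite -plus_INR plusE compl.
nra.
Qed.

Section Arcs.
Variables (T : finType) (r : rel T).

Definition arcs (A B : {set T}) : nat :=
  #|[set p : T * T | [&& p.1 \in A, p.2 \in B & r p.1 p.2]]|.

Lemma cut_arcs (A : {set T}) : cut r A = arcs A (~: A).
Proof. by apply: eq_card => p; rewrite !inE. Qed.

Lemma arcs_setT (A : {set T}) : arcs A setT = vol r A.
Proof.
rewrite /arcs card_set_sum -(pair_bigA _ (fun x y => [&& x \in A, y \in setT & r x y] : nat)).
rewrite /vol [RHS]big_mkcond; apply: eq_bigr => x _ /=.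
case: (x \in A) => /=; last by rewrite big1.
by rewrite /deg card_set_sum; apply: eq_bigr => y _; rewrite !inE.
Qed.

Lemma leq_arcs (A A' B B' : {set T}) :
  A \subset A' -> B \subset B' -> arcs A B <= arcs A' B'.
Proof.
move=> /subsetP sAA' /subsetP sBB'; apply: subset_leq_card; apply/subsetP => p.
by rewrite !inE => /and3P [/sAA' -> /sBB' -> ->].
Qed.

Lemma arcsU (A B C : {set T}) : arcs A (B :|: C) <= arcs A B + arcs A C.
Proof.
apply: leq_trans (leq_card_setU _ _).1; apply: subset_leq_card; apply/subsetP => p.
by rewrite !inE => /and3P [-> /orP [] -> ->]; rewrite ?orbT.
Qed.

Lemma arcsC : symmetric r -> forall A B : {set T}, arcs A B = arcs B A.
Proof.
move=> r_sym.
have le_swap (A B : {set T}) : arcs A B <= arcs B A.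
  apply: leq_card_inj (can_inj swap_pairK) _ => p; rewrite !inE /=.
  by case/and3P => -> -> /=; rewrite r_sym.
by move=> A B; apply/eqP; rewrite eqn_leq !le_swap.
Qed.

Lemma cutC : symmetric r -> forall A : {set T}, cut r (~: A) = cut r A.
Proof. by move=> r_sym A; rewrite !cut_arcs setCK arcsC. Qed.

Lemma vol_regular (d : nat) (A : {set T}) : regular r d -> vol r A = d * #|A|.
Proof. by move=> r_reg; rewrite /vol (eq_bigr (fun=> d)) // sum_nat_const mulnC. Qed.

End Arcs.

Section Edges.
Variables (V : finType) (e : rel V).
Hypothesis e_simple : simple_graph e.

Definition edge_pred (q : pred (edgeT e)) (s : {set V}) : bool :=
  if @insub _ (is_edge e) (edgeT e) s is Some f then q f else false.

Lemma is_edge_pair (u v : V) : e u v -> is_edge e [set u; v].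
Proof.
move=> e_uv; apply/existsP; exists u; apply/existsP; exists v; rewrite e_uv eqxx !andbT.
by apply/eqP => eq_uv; move: e_uv; rewrite eq_uv (proj2 e_simple).
Qed.

Lemma edge_pred_pair (q : pred (edgeT e)) (u v : V) (uv : is_edge e [set u; v]) :
  edge_pred q [set u; v] = q (Sub [set u; v] uv).
Proof. by rewrite /edge_pred insubT. Qed.

Lemma lab_pair (Y : {ffun edgeT e -> bool}) (u v : V) (uv : is_edge e [set u; v]) :
  lab Y [set u; v] = Y (Sub [set u; v] uv).
Proof. by rewrite /lab insubT. Qed.

Lemma card_arcs_of_edge (f : edgeT e) :
  #|[set p : V * V | e p.1 p.2 && (val f == [set p.1; p.2])]| = 2.
Proof.
have [e_sym e_irr] := e_simple.
have /existsP [u /existsP [v /and3P [neq_uv e_uv /eqP ->]]] := valP f.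
have <- : #|[set (u, v); (v, u)]| = 2 by rewrite cards2 xpair_eqE negb_and neq_uv.
apply: eq_card => -[a b]; rewrite !inE /= !xpair_eqE.
apply/idP/idP => [/andP [e_ab /eqP uv_ab] | /orP [] /andP [/eqP -> /eqP ->]].
- have neq_ab : a != b by apply/eqP => eq_ab; move: e_ab; rewrite eq_ab e_irr.
  have : a \in [set u; v] by rewrite uv_ab !inE eqxx.
  have : b \in [set u; v] by rewrite uv_ab !inE eqxx orbT.
  rewrite !inE => /orP [] /eqP b_eq /orP [] /eqP a_eq; subst a b;
    by move: neq_ab; rewrite ?eqxx ?orbT.
- by rewrite e_uv eqxx.
- by rewrite e_sym e_uv setUC eqxx.
Qed.

Lemma card_arcs_edge_pred (q : pred (edgeT e)) :
  #|[set p : V * V | e p.1 p.2 && edge_pred q [set p.1; p.2]]| = 2 * #|[set f | q f]|.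
Proof.
have -> : 2 * #|[set f | q f]| = \sum_f \sum_(p : V * V)
    (q f && (e p.1 p.2 && (val f == [set p.1; p.2])) : nat).
  rewrite card_set_sum big_distrr /=; apply: eq_bigr => f _.
  case: (q f); last by rewrite big1.
  by rewrite muln1 -(card_arcs_of_edge f) card_set_sum.
rewrite exchange_big card_set_sum /=; apply: eq_bigr => p _.
case e_p: (e p.1 p.2); last by rewrite big1 // => f _; rewrite andbF.
rewrite (edge_pred_pair q (is_edge_pair e_p)) (bigD1 (Sub _ (is_edge_pair e_p))) //= eqxx andbT.
rewrite big1 ?addn0 // => f /negbTE neq_f.
by rewrite -[[set p.1; p.2]](@SubK _ _ (edgeT e) _ (is_edge_pair e_p)) val_eqE neq_f andbF.
Qed.

End Edges.

Section Lift.
Variables (V : finType) (e : rel V).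
Hypothesis e_simple : simple_graph e.

Lemma deg_dcover (Y : {ffun edgeT e -> bool}) (x : V * bool) :
  deg (dcover Y) x = deg e x.1.
Proof.
rewrite /deg card_set_sum -(pair_bigA _ (fun v b => dcover Y x (v, b) : nat)) /=.
rewrite card_set_sum; apply: eq_bigr => v _; rewrite big_bool /dcover /=.
by case: (e x.1 v); case: (lab Y _); case: x.2.
Qed.

Variable S : {set V * bool}.

Definition side (v : V) : bool := (v, true) \in S.
Definition shadow : {set V} := [set v | ((v, false) \in S) || ((v, true) \in S)].
Definition shadow2 : {set V} := [set v | ((v, false) \in S) && ((v, true) \in S)].
Definition shadow1 : {set V} := [set v | ((v, false) \in S) (+) ((v, true) \in S)].

Lemma card_lift_set : #|S| = #|shadow| + #|shadow2|.
Proof.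
rewrite card_sum (eq_bigr (fun p => (p.1, p.2) \in S : nat)) => [|[] //].
rewrite -(pair_bigA _ (fun v b => (v, b) \in S : nat)) !card_sum -big_split /=.
apply: eq_bigr => v _; rewrite big_bool !inE.
by case: ((v, false) \in S); case: ((v, true) \in S).
Qed.

Lemma card_shadow : #|shadow| = #|shadow1| + #|shadow2|.
Proof.
rewrite !card_sum -big_split /=; apply: eq_bigr => v _; rewrite !inE.
by case: ((v, false) \in S); case: ((v, true) \in S).
Qed.

Lemma mem_shadow1 (v : V) (b : bool) : v \in shadow1 -> ((v, b) \in S) = (b == side v).
Proof. by rewrite inE /side; case: b; case: ((v, false) \in S); case: ((v, true) \in S). Qed.

Lemma mem_side (v : V) : v \in shadow -> (v, side v) \in S.
Proof. by rewrite inE /side; case vS: ((v, true) \in S); rewrite ?orbF. Qed.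

Lemma notin_shadow (v : V) (b : bool) : v \notin shadow -> (v, b) \notin S.
Proof. by rewrite inE negb_or => /andP []; case: b. Qed.

Definition inner_edges : {set edgeT e} := [set f : edgeT e | val f \subset shadow1].
Definition edge_parity (f : edgeT e) : bool := odd #|val f :&: [set v | side v]|.

Lemma arcs_shadow1 : arcs e shadow1 shadow1 = 2 * #|inner_edges|.
Proof.
rewrite -card_arcs_edge_pred //; apply: eq_card => p; rewrite !inE.
case e_p: (e p.1 p.2); rewrite ?andbF //=.
by rewrite (edge_pred_pair _ (is_edge_pair e_simple e_p)) /= subUset !sub1set !inE andbT.
Qed.

Variable Y : {ffun edgeT e -> bool}.

(* For [p.1] in the shadow, the lift of [p] starting at a copy of [p.1] in [S]. *)
Definition lift_arc (p : V * V) : (V * bool) * (V * bool) :=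
  ((p.1, side p.1), (p.2, side p.1 (+) lab Y [set p.1; p.2])).

Lemma card_leaving_lifts :
  #|[set p : V * V | [&& p.1 \in shadow, e p.1 p.2 & (lift_arc p).2 \notin S]]|
  <= cut (dcover Y) S.
Proof.
have lift_inj : injective lift_arc by move=> [a b] [a' b'] [-> _ -> _].
apply: leq_card_inj lift_inj _ => p; rewrite inE => /and3P [p1S e_p p2S].
rewrite inE mem_side //= p2S /dcover /= e_p /=.
by case: (side p.1); case: (lab Y _).
Qed.

Lemma cut_shadow : cut e shadow <= cut (dcover Y) S.
Proof.
apply: leq_trans card_leaving_lifts; apply: subset_leq_card; apply/subsetP => p.
by rewrite inE => /and3P [p1S p2S e_p]; rewrite inE p1S e_p /= notin_shadow.
Qed.

(* Dually, lift [p] to the arc ending at a copy of [p.2] outside [S]. *)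
Lemma cut_shadow2 : cut e shadow2 <= cut (dcover Y) S.
Proof.
pose b v := ~~ side v.
pose g (p : V * V) := ((p.1, b p.2 (+) lab Y [set p.1; p.2]), (p.2, b p.2)).
have g_inj : injective g by move=> [a c] [a' c'] [-> _ -> _].
apply: leq_card_inj g_inj _ => p; rewrite inE => /and3P [p1S p2S e_p]; rewrite inE /=.
have -> : (p.1, b p.2 (+) lab Y [set p.1; p.2]) \in S.
  by move: p1S; rewrite inE; case: (_ (+) _) => /andP [].
have -> : (p.2, b p.2) \notin S.
  case: (boolP (p.2 \in shadow)) => [p2_shadow | /notin_shadow //].
  have p2_shadow1 : p.2 \in shadow1.
    by move: p2S p2_shadow; rewrite !inE; case: ((p.2, false) \in S); case: ((p.2, true) \in S).
  by rewrite (mem_shadow1 _ p2_shadow1) /b; case: (side p.2).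
by rewrite /dcover /= e_p /b; case: (side p.2); case: (lab Y _).
Qed.

Definition mismatches : nat := #|[set f in inner_edges | Y f != edge_parity f]|.

Lemma cut_lift_shadow1 : arcs e shadow1 (~: shadow) + 2 * mismatches <= cut (dcover Y) S.
Proof.
have -> : 2 * mismatches = #|[set p : V * V | [&& p.1 \in shadow1, p.2 \in shadow1,
                                               e p.1 p.2 & (lift_arc p).2 \notin S]]|.
  rewrite -card_arcs_edge_pred //; apply: eq_card => p; rewrite [in LHS]inE [in RHS]inE.
  case e_p: (e p.1 p.2); rewrite ?andbF //=.
  have e_uv := is_edge_pair e_simple e_p.
  have neq_p : p.1 != p.2 by apply/eqP => eq_p; move: e_p; rewrite eq_p (proj2 e_simple).
  rewrite (edge_pred_pair _ e_uv) (lab_pair Y e_uv) inE /= subUset !sub1set.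
  case: (boolP (p.1 \in shadow1)) => //= _; case: (boolP (p.2 \in shadow1)) => //= p2S.
  rewrite (mem_shadow1 _ p2S) /edge_parity /= odd_card_pairI // !inE.
  by case: (side _); case: (side _); case: (Y _).
apply: leq_trans card_leaving_lifts.
rewrite -[X in _ <= X](cardsID [set p : V * V | p.2 \in shadow1]) [X in _ <= X]addnC.
apply: leq_add; apply: subset_leq_card; apply/subsetP => p; rewrite !inE /= /side;
  case: (lab Y [set p.1; p.2]); case: (e p.1 p.2); case: ((p.1, true) \in S) => /=;
  by case: ((p.1, false) \in S); case: ((p.2, false) \in S); case: ((p.2, true) \in S).
Qed.

End Lift.

Section Expansion.
Variables (V : finType) (e : rel V) (d : nat).
Hypotheses (e_simple : simple_graph e) (e_reg : regular e d).

Lemma vol_dcover (Y : {ffun edgeT e -> bool}) (A : {set V * bool}) :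
  vol (dcover Y) A = d * #|A|.
Proof. by apply: vol_regular => x; rewrite deg_dcover e_reg. Qed.

(* The only way [S] can have a small cut in the lift: when [shadow1 S] is small,
   [lift_cut_conductance] bounds the cut of [S] for every labelling. *)
Definition sparse_lift (S : {set V * bool}) (Y : {ffun edgeT e -> bool}) : bool :=
  [&& #|S| <= #|V|, #|V| < 2 * #|shadow1 S| & 32 * cut (dcover Y) S < d * #|S|].

Lemma sparse_lift_mismatches (S : {set V * bool}) (Y : {ffun edgeT e -> bool}) :
  sparse_lift S Y ->
  32 * mismatches S Y < d * #|V| /\ 7 * (d * #|V|) < 32 * #|inner_edges e S|.
Proof.
case/and3P => S_small S1_big sparse.
have cut2 := cut_shadow2 S Y.
have cut1 := cut_lift_shadow1 e_simple S Y.
have arcs12 : arcs e (shadow1 S) (shadow2 S) <= cut e (shadow2 S).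
  rewrite cut_arcs (arcsC (proj1 e_simple) (shadow1 S)); apply: leq_arcs => //.
  by apply/subsetP => v; rewrite !inE; case: ((v, false) \in S); case: ((v, true) \in S).
have deg1 : d * #|shadow1 S| <=
    arcs e (shadow1 S) (~: shadow S) + arcs e (shadow1 S) (shadow2 S)
    + arcs e (shadow1 S) (shadow1 S).
  have cover : [set: V] \subset ~: shadow S :|: shadow2 S :|: shadow1 S.
    by apply/subsetP => v _; rewrite !inE; case: ((v, false) \in S); case: ((v, true) \in S).
  rewrite -(vol_regular _ e_reg) -arcs_setT; apply: leq_trans (leq_arcs e (subxx _) cover) _.
  by apply: leq_trans (arcsU e _ _ _) _; rewrite leq_add2r arcsU.
have := arcs_shadow1 e_simple S.
have := leq_mul (leqnn d) S_small; have := leq_mul (leqnn d) S1_big.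
lia.
Qed.

Lemma lift_small_side (S : {set V * bool}) (Y : {ffun edgeT e -> bool}) :
  #|S| <= #|V| -> 2 * #|shadow1 S| <= #|V| ->
  exists A : {set V}, [/\ 2 * #|A| <= #|V|, #|S| <= 4 * #|A| & cut e A <= cut (dcover Y) S].
Proof.
move=> S_small S1_small.
have cardS := card_lift_set S; have card_sh := card_shadow S.
have := cut_shadow S Y; have := cardsC (shadow S).
case: (leqP (2 * #|shadow S|) #|V|) => sh_small card_shC cut_sh.
  by exists (shadow S); split => //; lia.
by exists (~: shadow S); rewrite (cutC (proj1 e_simple)); split => //; lia.
Qed.

Lemma card_sparse_lifts (S : {set V * bool}) :
  (INR #|[set Y | sparse_lift S Y]|
   <= INR #|{ffun edgeT e -> bool}| * exp (- (INR (d * #|V|) / 256)))%Re.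
Proof.
rewrite card_ffun card_bool; set B := [set Y | _].
have [-> | [Y0]] := set_0Vmem B.
  rewrite cards0 /= Rmult_comm; apply: Rmult_le_pos; last exact: pos_INR.
  by apply: Rlt_le; apply: exp_pos.
rewrite inE => /sparse_lift_mismatches [_ inner_big].
set k := d * #|V| %/ 32.
have B_sub : B \subset [set Y | mismatches S Y <= k].
  apply/subsetP => Y; rewrite !inE => /sparse_lift_mismatches [few _].
  by rewrite /k; lia.
have count := card_few_mismatches (inner_edges e S) (edge_parity S) k.
have tail := @tail_bound #|inner_edges e S| k (d * #|V|) ltac:(rewrite /k; lia) inner_big.
have m_gt0 : (0 < INR (4 ^ #|inner_edges e S|))%Re.
  by apply: lt_0_INR; apply/ltP; rewrite expn_gt0.
apply: (Rmult_le_reg_r _ _ _ m_gt0).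
apply: Rle_trans (_ : INR (2 ^ #|edgeT e|) * INR (3 ^ #|inner_edges e S| * 2 ^ k) <= _)%Re.
  rewrite -!INR_muln; apply: le_INR; apply/leP; rewrite mulnCA mulnA.
  exact: leq_trans (leq_mul (subset_leq_card B_sub) (leqnn _)) count.
rewrite Rmult_assoc [(exp _ * _)%Re]Rmult_comm; apply: Rmult_le_compat_l => //.
exact: pos_INR.
Qed.

Variable varphi : R.
Hypothesis e_phi : conductance_ge e varphi.

Lemma conductance_cut (A : {set V}) :
  2 * #|A| <= #|V| -> (varphi * INR (d * #|A|) <= INR (cut e A))%Re.
Proof.
move=> A_small; have cut_ge0 := pos_INR (cut e A).
have [-> | dA_pos] := posnP (d * #|A|); first by rewrite Rmult_0_r.
have := e_phi; rewrite /conductance_ge => /(_ A).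
rewrite !(vol_regular _ e_reg) cardsT Rle_div_INR //; apply => //.
by rewrite mulnA [2 * d]mulnC -mulnA leq_mul2l A_small orbT.
Qed.

Lemma lift_cut_conductance (S : {set V * bool}) (Y : {ffun edgeT e -> bool}) :
  #|S| <= #|V| -> 2 * #|shadow1 S| <= #|V| ->
  (varphi * INR (d * #|S|) <= 4 * INR (cut (dcover Y) S))%Re.
Proof.
move=> S_small S1_small; have cut_ge0 := pos_INR (cut (dcover Y) S).
have [phi_le0 | phi_gt0] := Rle_lt_dec varphi 0; first by have := pos_INR (d * #|S|); nra.
have [A [A_small S_le cutA]] := lift_small_side Y S_small S1_small.
have := conductance_cut A_small.
have : (INR (d * #|S|) <= 4 * INR (d * #|A|))%Re.
  have -> : 4%Re = INR 4 by rewrite (INR_IZR_INZ 4).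
  rewrite -INR_muln; apply: le_INR; apply/leP; have := leq_mul (leqnn d) S_le; lia.
have := le_INR _ _ (elimT leP cutA).
nra.
Qed.

Lemma good_lift_conductance (Y : {ffun edgeT e -> bool}) :
  (forall S, ~~ sparse_lift S Y) -> conductance_ge (dcover Y) (Rmin (varphi / 4) (1 / 32)).
Proof.
move=> dense S vol_pos vol_half.
rewrite !vol_dcover cardsT card_prod card_bool in vol_pos vol_half *.
have S_small : #|S| <= #|V|.
  have d_pos : 0 < d by move: vol_pos; rewrite muln_gt0 => /andP [].
  by move: vol_half; rewrite mulnCA [#|V| * 2]mulnC leq_pmul2l // leq_pmul2l.
rewrite Rle_div_INR //.
have c_phi := Rmin_l (varphi / 4) (1 / 32); have c_32 := Rmin_r (varphi / 4) (1 / 32).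
have cut_ge0 := pos_INR (cut (dcover Y) S); have dS_ge0 := pos_INR (d * #|S|).
have [S1_small | S1_big] := leqP (2 * #|shadow1 S|) #|V|.
  have lift := lift_cut_conductance Y S_small S1_small.
  have c_le := Rmult_le_compat_r _ _ _ dS_ge0 c_phi.
  set X := INR (d * #|S|) in lift c_le *; set C := INR (cut _ _) in lift c_le *.
  have : (varphi / 4 * X = varphi * X / 4)%Re by field.
  lra.
have c_le := Rmult_le_compat_r _ _ _ dS_ge0 c_32.
have := dense S; rewrite /sparse_lift S_small S1_big /= -leqNgt => /leP /le_INR.
rewrite [INR (32 * _)]INR_muln (INR_IZR_INZ 32) /=.
set X := INR (d * #|S|) in c_le *; set C := INR (cut _ _) in c_le *.
lra.
Qed.

End Expansion.

Theorem mainTheorem15 (V : finType) (e : rel V) (d : nat) (varphi : R) :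
  simple_graph e ->
  regular e d ->
  conductance_ge e varphi ->
  exists A : {set {ffun edgeT e -> bool}},
    (forall Y, Y \in A ->
       conductance_ge (dcover Y) (Rmin (Rdiv varphi (IZR 4)) (Rdiv (IZR 1) (IZR 32)))) /\
    Rle (Rminus (IZR 1)
               (Rmult (pow (IZR 2) (2 * #|V|))
                      (exp (Ropp (Rdiv (Rmult (INR d) (INR #|V|)) (IZR 256))))))
        (Rdiv (INR #|A|) (INR (2 ^ #|edgeT e|))).
Proof.
move=> e_simple e_reg e_phi.
exists [set Y | [forall S, ~~ sparse_lift d S Y]]; split.
  by move=> Y; rewrite inE => /forallP; apply: good_lift_conductance.
have card_subsets : #|{set V * bool}| = 2 ^ (2 * #|V|).
  by have := card_powerset [set: V * bool]; rewrite powersetT !cardsT card_prod card_bool mulnC.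
have := card_forall_ratio _ (card_sparse_lifts e_simple e_reg).
rewrite card_subsets card_ffun card_bool expn_gt0 INR_expn INR_muln (INR_IZR_INZ 2) /=.
by move=> /(_ isT).
Qed.
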